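(* Let $0<\alpha<\beta<\tfrac12$ and $\rho=\frac{\log\beta}{\log\alpha}$. There exist constants $K_1,K_2>0$ such that for all $y,\tilde y\in A_\alpha$ with $|y-\tilde y|$ sufficiently small, $$K_1|y-\tilde y|^\rho\ \ge\ |I_p|\ \ge\ K_2|y-\tilde y|^\rho,\qquad I_p:=\sum_{i=0}^\infty\beta^i\big(y_{-i-1}-\tilde y_{-i-1}\big).$$
   Context: $A_\alpha\subset[0,1]$ is the Cantor set with $A_\alpha=\alpha A_\alpha\cup(\alpha A_\alpha+1-\alpha)$. The skinny baker's map $B_\alpha(x,y)=(2x,\alpha y)$ if $0\le x<\tfrac12$ and $(2x-1,\alpha y+1-\alpha)$ if $\tfrac12\le x<1$ is invertible on $[0,1)\times A_\alpha$ with inverse $B_\alpha^{-1}(x,y)=(x/2,y/\alpha)$ if $y\le\tfrac12$ and $((x+1)/2,(y-(1-\alpha))/\alpha)$ if $y>\tfrac12$. For $n\in\mathbb N$, $y_{-n}$ denotes the second coordinate of $B_\alpha^{-n}(x,y)$ (it depends only on $y$); similarly $\tilde y_{-n}$. *)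

From Stdlib Require Import Reals.
From Coquelicot Require Import Coquelicot.
Open Scope R_scope.

(* The middle-alpha Cantor set A_alpha = alpha A ∪ (alpha A + 1 - alpha),
   described as the attractor of the IFS {y -> alpha y, y -> alpha y + 1 - alpha}:
   points (1-alpha) * sum_k d_k alpha^k with digits d_k in {0,1}. *)
Definition A_alpha (alpha : R) (y : R) : Prop :=
  exists d : nat -> bool,
    is_series (fun k => (1 - alpha) * (if d k then 1 else 0) * alpha ^ k) y.

(* Second coordinate of B_alpha^{-1}(x,y) *)
Definition binv_y (alpha : R) (y : R) : R :=
  if Rle_dec y (1/2) then y / alpha else (y - (1 - alpha)) / alpha.

Fixpoint y_neg (alpha : R) (n : nat) (y : R) : R :=
  match n with
  | O => y
  | S m => binv_y alpha (y_neg alpha m y)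
  end.

Definition I_p (alpha beta y yt : R) : R :=
  Series (fun i => beta ^ i * (y_neg alpha (S i) y - y_neg alpha (S i) yt)).

(** The digits of [y] and [yt] agree up to some first index [n]; below [n] the
    gap [y_{-j} - yt_{-j}] is multiplied by [1/alpha] at each step, so
    [y - yt = alpha^n g] with [1 - 2 alpha <= |g| <= 1].  Splitting [I_p] at
    [n], its first [n] terms form the geometric sum
    [g (beta^n - alpha^n) / (beta - alpha)] and the rest is [beta^n] times a
    sum bounded by [1 / (1 - beta)], which cannot cancel the head because
    [beta < 1/2] once [alpha^n << beta^n].  Hence [|I_p|] is comparable to
    [beta^n = (alpha^n)^rho], i.e. to [|y - yt|^rho]. *)

From Stdlib Require Import Reals Lra Lia Psatz Classical.
From Coquelicot Require Import Coquelicot.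
Open Scope R_scope.

Definition digit (b : bool) : R := if b then 1 else 0.

Definition cantor_term (a : R) (d : nat -> bool) (k : nat) : R :=
  (1 - a) * digit (d k) * a ^ k.

Definition cantor_point (a : R) (d : nat -> bool) : R := Series (cantor_term a d).

Lemma digit_bounds b : 0 <= digit b <= 1.
Proof. destruct b; unfold digit; lra. Qed.

Lemma cantor_point_ext (a : R) d e : (forall k, d k = e k) -> cantor_point a d = cantor_point a e.
Proof. intros de. apply Series_ext. intros k. unfold cantor_term. now rewrite de. Qed.

Section CantorPoint.
Variable a : R.
Hypothesis a_gt0_lt1 : 0 < a < 1.

Lemma ex_series_geom_scaled : ex_series (fun k => (1 - a) * a ^ k).
Proof.
  apply (ex_series_scal_l (V := R_NormedModule)).
  apply ex_series_geom. rewrite Rabs_pos_eq; lra.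
Qed.

Lemma cantor_term_bounds d k : 0 <= cantor_term a d k <= (1 - a) * a ^ k.
Proof.
  pose proof (digit_bounds (d k)). pose proof (pow_lt a k ltac:(lra)).
  unfold cantor_term. split.
  - repeat apply Rmult_le_pos; lra.
  - apply Rmult_le_compat_r; nra.
Qed.

Lemma ex_series_cantor_term d : ex_series (cantor_term a d).
Proof.
  apply (ex_series_le (K := R_AbsRing) (V := R_CompleteNormedModule) _
           (fun k => (1 - a) * a ^ k)); [|exact ex_series_geom_scaled].
  intros k. pose proof (cantor_term_bounds d k).
  change (norm (cantor_term a d k)) with (Rabs (cantor_term a d k)).
  rewrite Rabs_pos_eq; lra.
Qed.

Lemma cantor_point_bounds d : 0 <= cantor_point a d <= 1.
Proof.
  unfold cantor_point. split.
  - replace 0 with (Series (fun _ => 0 * 0)) by (rewrite Series_scal_l; ring).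
    apply Series_le; [|apply ex_series_cantor_term].
    intros k. pose proof (cantor_term_bounds d k). lra.
  - replace 1 with (Series (fun k => (1 - a) * a ^ k)).
    + apply Series_le; [apply cantor_term_bounds | apply ex_series_geom_scaled].
    + rewrite Series_scal_l, Series_geom by (rewrite Rabs_pos_eq; lra). field. lra.
Qed.

Lemma cantor_point_unfold d :
  cantor_point a d = (1 - a) * digit (d 0%nat) + a * cantor_point a (fun k => d (S k)).
Proof.
  unfold cantor_point. rewrite Series_incr_1 by apply ex_series_cantor_term.
  rewrite <- Series_scal_l. unfold cantor_term. simpl. f_equal; [ring|].
  apply Series_ext. intros k. simpl. ring.
Qed.

End CantorPoint.

Lemma A_alpha_cantor_point a y : A_alpha a y -> exists d, y = cantor_point a d.
Proof.
  intros [d Hd]. exists d. unfold cantor_point. symmetry. exact (is_series_unique _ _ Hd).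
Qed.

(** [B_alpha^{-1}] acts on digits as the shift: the threshold [1/2] of [binv_y]
    separates the two pieces [[0, alpha]] and [[1 - alpha, 1]]. *)
Lemma binv_y_cantor_point a d :
  0 < a < 1/2 -> binv_y a (cantor_point a d) = cantor_point a (fun k => d (S k)).
Proof.
  intros Ha.
  pose proof (cantor_point_unfold a ltac:(lra) d) as unf.
  pose proof (cantor_point_bounds a ltac:(lra) (fun k => d (S k))).
  unfold binv_y, digit in *.
  destruct (d 0%nat), (Rle_dec (cantor_point a d) (1/2)); rewrite unf in *;
    first [field; lra | exfalso; nra].
Qed.

Lemma y_neg_cantor_point a d m :
  0 < a < 1/2 -> y_neg a m (cantor_point a d) = cantor_point a (fun k => d (m + k)%nat).
Proof.
  intros Ha. induction m as [|m IH]; simpl.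
  - now apply cantor_point_ext.
  - rewrite IH, binv_y_cantor_point by exact Ha.
    apply cantor_point_ext. intros k. f_equal. lia.
Qed.

Definition orbit_gap (a y yt : R) (j : nat) : R := y_neg a j y - y_neg a j yt.

Section OrbitGap.
Variables (a : R) (d e : nat -> bool).
Hypothesis a_gt0_lthalf : 0 < a < 1/2.
Local Notation gap := (orbit_gap a (cantor_point a d) (cantor_point a e)).

Lemma orbit_gap_bound j : Rabs (gap j) <= 1.
Proof.
  unfold orbit_gap. rewrite !y_neg_cantor_point by exact a_gt0_lthalf.
  pose proof (cantor_point_bounds a ltac:(lra) (fun k => d (j + k)%nat)).
  pose proof (cantor_point_bounds a ltac:(lra) (fun k => e (j + k)%nat)).
  apply Rabs_le. lra.
Qed.

Lemma orbit_gap_unfold j : gap j = (1 - a) * (digit (d j) - digit (e j)) + a * gap (S j).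
Proof.
  unfold orbit_gap. rewrite !y_neg_cantor_point by exact a_gt0_lthalf.
  rewrite (cantor_point_unfold a ltac:(lra) (fun k => d (j + k)%nat)).
  rewrite (cantor_point_unfold a ltac:(lra) (fun k => e (j + k)%nat)).
  rewrite Nat.add_0_r.
  rewrite (cantor_point_ext a (fun k => d (j + S k)%nat) (fun k => d (S j + k)%nat))
    by (intros; f_equal; lia).
  rewrite (cantor_point_ext a (fun k => e (j + S k)%nat) (fun k => e (S j + k)%nat))
    by (intros; f_equal; lia).
  ring.
Qed.

Lemma orbit_gap_same_digit j : d j = e j -> gap j = a * gap (S j).
Proof. intros de. rewrite orbit_gap_unfold, de. ring. Qed.

Lemma orbit_gap_other_digit j : d j <> e j -> 1 - 2 * a <= Rabs (gap j).
Proof.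
  intros de. rewrite orbit_gap_unfold.
  pose proof (orbit_gap_bound (S j)) as bnd. apply Rabs_le_between in bnd.
  unfold digit. destruct (d j), (e j); try congruence.
  - rewrite Rabs_pos_eq; nra.
  - rewrite Rabs_left1; nra.
Qed.

End OrbitGap.

Lemma first_difference (d e : nat -> bool) :
  (exists k, d k <> e k) -> exists n, (forall j, (j < n)%nat -> d j = e j) /\ d n <> e n.
Proof.
  intros [k dek]. revert dek.
  induction k as [k IH] using (well_founded_induction Wf_nat.lt_wf). intros dek.
  destruct (classic (forall j, (j < k)%nat -> d j = e j)) as [agree | disagree].
  - exists k. auto.
  - apply not_all_ex_not in disagree. destruct disagree as [j dej].
    apply imply_to_and in dej. destruct dej. apply (IH j); auto.
Qed.

Lemma geometric_prefix (a : R) (D : nat -> R) n :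
  (forall j, (j < n)%nat -> D j = a * D (S j)) ->
  forall k j, (j + k = n)%nat -> D j = a ^ k * D n.
Proof.
  intros geom k. induction k as [|k IH]; intros j jk; simpl.
  - replace j with n by lia. ring.
  - rewrite geom, (IH (S j)) by lia. ring.
Qed.

Definition tail_sum (b : R) (D : nat -> R) (m : nat) : R :=
  Series (fun i => b ^ i * D (S (m + i))).

Section TailSum.
Variables (b : R) (D : nat -> R).
Hypotheses (b_gt0_lt1 : 0 < b < 1) (D_bound : forall j, Rabs (D j) <= 1).

Lemma tail_term_abs_bound m i : Rabs (b ^ i * D (S (m + i))) <= b ^ i.
Proof.
  rewrite Rabs_mult, Rabs_pos_eq by (apply pow_le; lra).
  pose proof (D_bound (S (m + i))). pose proof (pow_le b i ltac:(lra)). nra.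
Qed.

Lemma ex_series_pow : ex_series (fun i => b ^ i).
Proof. apply ex_series_geom. rewrite Rabs_pos_eq; lra. Qed.

Lemma ex_series_tail m : ex_series (fun i => b ^ i * D (S (m + i))).
Proof.
  apply (ex_series_le (K := R_AbsRing) (V := R_CompleteNormedModule) _ (fun i => b ^ i));
    [apply tail_term_abs_bound | exact ex_series_pow].
Qed.

Lemma tail_sum_bound m : Rabs (tail_sum b D m) <= / (1 - b).
Proof.
  eapply Rle_trans; [apply Series_Rabs|].
  - apply (ex_series_le (K := R_AbsRing) (V := R_CompleteNormedModule) _ (fun i => b ^ i));
      [|exact ex_series_pow].
    intros i. change (norm (Rabs (b ^ i * D (S (m + i)))))
      with (Rabs (Rabs (b ^ i * D (S (m + i))))).
    rewrite Rabs_Rabsolu. apply tail_term_abs_bound.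
  - rewrite <- Series_geom by (rewrite Rabs_pos_eq; lra).
    apply Series_le; [|exact ex_series_pow].
    intros i. split; [apply Rabs_pos | apply tail_term_abs_bound].
Qed.

Lemma tail_sum_unfold m : tail_sum b D m = D (S m) + b * tail_sum b D (S m).
Proof.
  unfold tail_sum. rewrite Series_incr_1 by apply ex_series_tail.
  rewrite <- Series_scal_l. simpl. rewrite Nat.add_0_r. f_equal; [ring|].
  apply Series_ext. intros i. rewrite <- plus_n_Sm. simpl. ring.
Qed.

Lemma tail_sum_geometric_prefix a n :
  0 < a < b -> (forall j, (j < n)%nat -> D j = a * D (S j)) ->
  forall k m, (m + k = n)%nat ->
  tail_sum b D m = D n * (b ^ k - a ^ k) / (b - a) + b ^ k * tail_sum b D n.
Proof.
  intros Ha geom k. induction k as [|k IH]; intros m mk.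
  - replace m with n by lia. simpl. field. lra.
  - rewrite tail_sum_unfold, (IH (S m)), (geometric_prefix a D n geom k (S m)) by lia.
    simpl. field. lra.
Qed.

End TailSum.

(** The head [x (b^n - a^n)/(b - a)] beats the tail [b^n t] because
    [(1 - 2a)/(b - a) >= 2 > 1/(1 - b)] when [b <= 1/2]. *)
Lemma head_tail_bounds a b n x t :
  0 < a < b -> b <= 1/2 -> 1 - 2 * a <= Rabs x <= 1 -> Rabs t <= / (1 - b) ->
  Rabs (x * (b ^ n - a ^ n) / (b - a) + b ^ n * t) <= (/ (b - a) + / (1 - b)) * b ^ n /\
  (2 - / (1 - b)) * b ^ n - 2 * a ^ n <= Rabs (x * (b ^ n - a ^ n) / (b - a) + b ^ n * t).
Proof.
  intros Ha Hb Hx Ht.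
  set (G := (b ^ n - a ^ n) / (b - a)).
  assert (bn_pos : 0 < b ^ n) by (apply pow_lt; lra).
  assert (an_pos : 0 < a ^ n) by (apply pow_lt; lra).
  assert (anbn : a ^ n <= b ^ n) by (apply pow_incr; lra).
  assert (inv_pos : 0 < / (b - a)) by (apply Rinv_0_lt_compat; lra).
  assert (G_ge0 : 0 <= G) by (unfold G, Rdiv; apply Rmult_le_pos; lra).
  assert (G_le : G <= / (b - a) * b ^ n) by (unfold G, Rdiv; nra).
  assert (G_ge : 2 * (b ^ n - a ^ n) <= (1 - 2 * a) * G).
  { replace ((1 - 2 * a) * G) with ((1 - 2 * a) / (b - a) * (b ^ n - a ^ n))
      by (unfold G; field; lra).
    apply Rmult_le_compat_r; [lra|].
    apply (Rmult_le_reg_r (b - a)); [lra|].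
    unfold Rdiv. rewrite Rmult_assoc, Rinv_l by lra. lra. }
  replace (x * (b ^ n - a ^ n) / (b - a)) with (x * G) by (unfold G, Rdiv; ring).
  assert (head : Rabs (x * G) = Rabs x * G) by (rewrite Rabs_mult, (Rabs_pos_eq G); auto).
  assert (tail : Rabs (b ^ n * t) = b ^ n * Rabs t) by (rewrite Rabs_mult, Rabs_pos_eq; lra).
  pose proof (Rabs_triang (x * G) (b ^ n * t)).
  pose proof (Rabs_triang_inv (x * G) (- (b ^ n * t))) as inv.
  rewrite Rabs_Ropp in inv. unfold Rminus in inv. rewrite Ropp_involutive in inv.
  split; nra.
Qed.

Lemma I_p_depth_bounds a b y yt :
  0 < a < b -> b <= 1/2 -> A_alpha a y -> A_alpha a yt -> y <> yt ->
  exists n g, y - yt = a ^ n * g /\ 1 - 2 * a <= Rabs g <= 1 /\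
    Rabs (I_p a b y yt) <= (/ (b - a) + / (1 - b)) * b ^ n /\
    (2 - / (1 - b)) * b ^ n - 2 * a ^ n <= Rabs (I_p a b y yt).
Proof.
  intros Ha Hb Hy Hyt neq.
  destruct (A_alpha_cantor_point _ _ Hy) as [d ->].
  destruct (A_alpha_cantor_point _ _ Hyt) as [e ->].
  assert (Ha2 : 0 < a < 1/2) by lra.
  destruct (first_difference d e) as [n [agree differ]].
  { apply NNPP. intros same. apply neq, cantor_point_ext.
    intros k. apply NNPP. intros dek. apply same. exists k. exact dek. }
  set (D := orbit_gap a (cantor_point a d) (cantor_point a e)).
  pose proof (orbit_gap_bound a d e Ha2) as D_bound.
  assert (geom : forall j, (j < n)%nat -> D j = a * D (S j))
    by (intros j jn; apply orbit_gap_same_digit; auto).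
  exists n, (D n). split; [|split].
  - exact (geometric_prefix a D n geom n 0 eq_refl).
  - split; [apply orbit_gap_other_digit|]; auto.
  - change (I_p a b (cantor_point a d) (cantor_point a e)) with (tail_sum b D 0).
    rewrite (tail_sum_geometric_prefix b D ltac:(lra) D_bound a n ltac:(lra) geom n 0 eq_refl).
    apply head_tail_bounds; auto.
    + split; [apply orbit_gap_other_digit|]; auto.
    + apply tail_sum_bound; auto. lra.
Qed.

Lemma pow_ratio_eventually_le a b c :
  0 < a < b -> 0 < c -> exists N, forall n, (N <= n)%nat -> a ^ n <= c * b ^ n.
Proof.
  intros Hab Hc.
  assert (ratio : 0 <= a / b < 1).
  { split; [apply Rdiv_le_0_compat; lra|].
    apply (Rmult_lt_reg_r b); [lra|]. unfold Rdiv. rewrite Rmult_assoc, Rinv_l; lra. }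
  destruct (pow_lt_1_zero (a / b) ltac:(rewrite Rabs_pos_eq; lra) c Hc) as [N HN].
  exists N. intros n Nn. specialize (HN n Nn).
  rewrite Rabs_pos_eq in HN by (apply pow_le; lra).
  unfold Rdiv in HN. rewrite Rpow_mult_distr, pow_inv in HN.
  assert (bn_pos : 0 < b ^ n) by (apply pow_lt; lra).
  apply (Rmult_lt_compat_r (b ^ n)) in HN; [|exact bn_pos].
  rewrite Rmult_assoc, Rinv_l in HN by lra. lra.
Qed.

Lemma pow_lt_pow_index a m n : 0 < a < 1 -> a ^ n < a ^ m -> (m < n)%nat.
Proof.
  intros Ha lt. destruct (Nat.lt_ge_cases m n) as [mn | nm]; [exact mn|]. exfalso.
  replace m with (n + (m - n))%nat in lt by lia. rewrite pow_add in lt.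
  assert (0 < a ^ n) by (apply pow_lt; lra).
  assert (a ^ (m - n) <= 1) by (rewrite <- (pow1 (m - n)); apply pow_incr; lra).
  nra.
Qed.

Lemma Rpower_pow_scale a b x n :
  0 < a < 1 -> 0 < b -> 0 < x ->
  Rpower (a ^ n * x) (ln b / ln a) = b ^ n * Rpower x (ln b / ln a).
Proof.
  intros Ha Hb Hx.
  assert (ln a < 0) by (rewrite <- ln_1; apply ln_increasing; lra).
  rewrite <- Rpower_mult_distr by (try apply pow_lt; lra). f_equal.
  unfold Rpower. rewrite ln_pow by lra.
  replace (ln b / ln a * (INR n * ln a)) with (INR n * ln b) by (field; lra).
  rewrite <- ln_pow, exp_ln by (try apply pow_lt; lra). reflexivity.
Qed.

Lemma ln_ratio_pos a b : 0 < a < 1 -> 0 < b < 1 -> 0 < ln b / ln a.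
Proof.
  intros Ha Hb.
  assert (ln a < 0) by (rewrite <- ln_1; apply ln_increasing; lra).
  assert (ln b < 0) by (rewrite <- ln_1; apply ln_increasing; lra).
  unfold Rdiv. pose proof (Rinv_lt_0_compat (ln a) ltac:(lra)). nra.
Qed.

Lemma Rpower_between c x r :
  0 < c <= x -> x <= 1 -> 0 <= r -> Rpower c r <= Rpower x r <= 1.
Proof.
  intros Hcx Hx1 Hr. split; [apply Rle_Rpower_l; lra|].
  replace 1 with (Rpower 1 r) by (unfold Rpower; rewrite ln_1, Rmult_0_r; apply exp_0).
  apply Rle_Rpower_l; lra.
Qed.

Lemma Rpower_gap_bounds a b n g :
  0 < a < 1/2 -> 0 < b < 1 -> 1 - 2 * a <= Rabs g <= 1 ->
  Rpower (1 - 2 * a) (ln b / ln a) * b ^ n <= Rpower (Rabs (a ^ n * g)) (ln b / ln a)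
  <= b ^ n.
Proof.
  intros Ha Hb Hg.
  rewrite Rabs_mult, (Rabs_pos_eq (a ^ n)), Rpower_pow_scale by (try apply pow_le; lra).
  pose proof (Rpower_between (1 - 2 * a) (Rabs g) (ln b / ln a) ltac:(lra) ltac:(lra)
                (Rlt_le _ _ (ln_ratio_pos a b ltac:(lra) Hb))).
  assert (0 < b ^ n) by (apply pow_lt; lra). split; nra.
Qed.

Theorem lemma3p8 (alpha beta : R) :
  0 < alpha -> alpha < beta -> beta < 1/2 ->
  let rho := ln beta / ln alpha in
  exists K1 K2 : R, 0 < K1 /\ 0 < K2 /\
    exists delta : R, 0 < delta /\
      forall y yt : R, A_alpha alpha y -> A_alpha alpha yt ->
        0 < Rabs (y - yt) < delta ->
        K1 * Rpower (Rabs (y - yt)) rho >= Rabs (I_p alpha beta y yt) /\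
        Rabs (I_p alpha beta y yt) >= K2 * Rpower (Rabs (y - yt)) rho.
Proof.
  intros Ha Hab Hb rho.
  assert (rho_pos : 0 < rho) by (apply ln_ratio_pos; lra).
  set (eps := 2 - / (1 - beta)).
  assert (eps_pos : 0 < eps).
  { assert (/ (1 - beta) * (1 - beta) = 1) by (field; lra).
    assert (0 < / (1 - beta)) by (apply Rinv_0_lt_compat; lra). unfold eps. nra. }
  set (C := / (beta - alpha) + / (1 - beta)).
  set (P := Rpower (1 - 2 * alpha) rho).
  assert (P_pos : 0 < P) by apply exp_pos.
  destruct (pow_ratio_eventually_le alpha beta (eps / 4) ltac:(lra) ltac:(lra)) as [N HN].
  assert (C_pos : 0 < C).
  { pose proof (Rinv_0_lt_compat (beta - alpha) ltac:(lra)).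
    pose proof (Rinv_0_lt_compat (1 - beta) ltac:(lra)). unfold C. lra. }
  exists (C / P), (eps / 2). split; [apply Rdiv_lt_0_compat; lra|]. split; [lra|]. exists ((1 - 2 * alpha) * alpha ^ N).
  split; [apply Rmult_lt_0_compat; [lra | apply pow_lt; lra]|].
  intros y yt Hy Hyt [dist_pos dist_small].
  assert (neq : y <> yt) by (intros ->; rewrite Rminus_eq_0, Rabs_R0 in dist_pos; lra).
  destruct (I_p_depth_bounds alpha beta y yt ltac:(lra) ltac:(lra) Hy Hyt neq)
    as [n [g [diff [g_bounds [upper lower]]]]].
  assert (an_pos : 0 < alpha ^ n) by (apply pow_lt; lra).
  assert (deep : alpha ^ n <= eps / 4 * beta ^ n).
  { apply HN, Nat.lt_le_incl, (pow_lt_pow_index alpha); [lra|].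
    rewrite diff, Rabs_mult, Rabs_pos_eq in dist_small by lra.
    assert (0 < 1 - 2 * alpha) by lra. nra. }
  pose proof (Rpower_gap_bounds alpha beta n g ltac:(lra) ltac:(lra) g_bounds) as Pg.
  rewrite diff. fold rho P in Pg. fold C in upper. fold eps in lower. split; apply Rle_ge.
  - replace (C / P * Rpower (Rabs (alpha ^ n * g)) rho)
      with (C * (Rpower (Rabs (alpha ^ n * g)) rho / P)) by (field; lra).
    assert (beta ^ n <= Rpower (Rabs (alpha ^ n * g)) rho / P)
      by (apply (Rmult_le_reg_r P); [lra | unfold Rdiv; rewrite Rmult_assoc, Rinv_l; lra]).
    nra.
  - nra.
Qed.
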